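(* Assume Assumption A. Let $\{\mathscr F_1,\dots,\mathscr F_{\mathfrak p},\Delta_{\mathscr F}\}$, $\mathfrak p\ge2$, be a partition of $E$ and $\beta^-_N,\beta_N$ positive sequences with $\beta^-_N/\beta_N\to0$ satisfying (H0)–(H3) with $(a_N,b_N)=(\beta^-_N,\beta_N)$. Let $X_{\mathscr F}$ be the Markov chain on $P=\{1,\dots,\mathfrak p\}$ with rates $r_{\mathscr F}(x,y)$ from (H1), $G_1,\dots,G_{\mathfrak q}$ its recurrent classes, $\mathscr G_a=\bigcup_{x\in G_a}\mathscr F_x$, $\breve{\mathscr G}_a=\bigcup_{b\ne a}\mathscr G_b$, assume $\mathfrak q>1$ and set $1/\beta^+_N=\sum_{a=1}^{\mathfrak q}\mathrm{Cap}_N(\mathscr G_a,\breve{\mathscr G}_a)/\mu_N(\mathscr G_a)$. Then $\lim_{N\to\infty}\beta_N/\beta^+_N=0$.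
   Context: Setting: $E$ is a fixed finite set. For each $N\ge1$, $(\eta^N_t)$ is a continuous-time irreducible Markov chain on $E$ with jump rates $R_N(\eta,\xi)$, holding rates $\lambda_N(\eta)=\sum_{\xi\neq\eta}R_N(\eta,\xi)$ and unique invariant probability $\mu_N$; $\mathbb P_\eta,\mathbb E_\eta$ law/expectation from $\eta$. $H_A=\inf\{t>0:\eta^N_t\in A\}$, $H^+_A=\inf\{t>\tau_1:\eta^N_t\in A\}$, $\tau_1$ first jump time; $\mathrm{Cap}_N(A,B)=\sum_{\eta\in A}\mu_N(\eta)\lambda_N(\eta)\mathbb P_\eta[H_B<H^+_A]$, $\mathrm{Cap}_N(\eta,\xi)=\mathrm{Cap}_N(\{\eta\},\{\xi\})$. The trace on nonempty $F\subset E$ is $\eta^F_t=\eta^N_{S_F(t)}$, $S_F(t)=\sup\{s:\int_0^s\mathbf 1\{\eta^N_r\in F\}dr\le t\}$, with jump rates $R^F_N$. Ordered families: a finite family of sequences of positive reals $(a^r_N)$, $r\in\mathfrak R$, is ordered if for all $r\neq s$, $\arctan(a^r_N/a^s_N)$ converges. Assumption A: (i) for each $\eta\neq\xi$, either $R_N(\eta,\xi)=0$ for all $N$ or $>0$ for all $N$; $\mathbb B$ is the set of pairs with positive rates; (ii) for every $m\ge1$ the family $\prod_{(\eta,\xi)\in\mathbb B}R_N(\eta,\xi)^{k(\eta,\xi)}$, $k:\mathbb B\to\mathbb Z_+$, $\sum k=m$, is ordered. Conditions for a partition $\{\mathscr F_1,\dots,\mathscr F_{\mathfrak p},\Delta_{\mathscr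 F}\}$ (independent of $N$) and $(a_N,b_N)$, with $\mathscr F=\bigcup_x\mathscr F_x$ and $r^{\mathscr F}_N(\mathscr F_x,\mathscr F_y)=\mu_N(\mathscr F_x)^{-1}\sum_{\eta\in\mathscr F_x}\mu_N(\eta)\sum_{\xi\in\mathscr F_y}R^{\mathscr F}_N(\eta,\xi)$: (H0) for each $x$, $\eta\in\mathscr F_x$, $\lim_N\mu_N(\eta)/\mu_N(\mathscr F_x)\in(0,1]$ exists; (H1) for $x\ne y$, $r_{\mathscr F}(x,y):=\lim_Nb_Nr^{\mathscr F}_N(\mathscr F_x,\mathscr F_y)\in[0,\infty)$ exists, and $\sum_x\sum_{y\ne x}r_{\mathscr F}(x,y)>0$; (H2) for $|\mathscr F_x|\ge2$, $\eta\ne\xi\in\mathscr F_x$: $\liminf_Na_N\mathrm{Cap}_N(\eta,\xi)/\mu_N(\mathscr F_x)>0$; (H3) for every $t>0$, $\lim_N\max_\eta\mathbb E_\eta[\int_0^t\mathbf 1\{\eta^N_{sb_N}\in\Delta_{\mathscr F}\}ds]=0$. *)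

From Stdlib Require Import Reals ClassicalEpsilon.
From mathcomp Require Import all_boot.

Set Implicit Arguments.
Unset Strict Implicit.
Unset Printing Implicit Defensive.

Open Scope R_scope.

Definition posb (x : R) : bool := if Rlt_dec 0 x then true else false.

(** limit of a real sequence (chosen by epsilon; meaningful when it converges) *)
Definition Lim (u : nat -> R) : R := epsilon (inhabits R0) (fun l : R => Un_cv u l).

Section Chain.
Variable E : finType.

(** [Rt x y] : jump rate from x to y (diagonal ignored). *)
Definition holding (Rt : E -> E -> R) (x : E) : R :=
  \big[Rplus/0]_(y | y != x) Rt x y.

Definition jumpP (Rt : E -> E -> R) (x y : E) : R :=
  if y == x then 0 else Rt x y / holding Rt x.

(** [hitn Rt A B n z] = P_z[ H_B < H_A and H_B <= n jumps ] (hitting times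
    counted from time 0, i.e. value 1 on B, 0 on A \ B). *)
Fixpoint hitn (Rt : E -> E -> R) (A B : {set E}) (n : nat) (z : E) : R :=
  if z \in B then 1 else if z \in A then 0 else
  match n with
  | O => 0
  | S m => \big[Rplus/0]_(y : E) (jumpP Rt z y * hitn Rt A B m y)
  end.

Definition hitp (Rt : E -> E -> R) (A B : {set E}) (z : E) : R :=
  Lim (fun n => hitn Rt A B n z).

(** Cap(A,B) = sum_{x in A} mu(x) lambda(x) P_x[H_B < H_A^+]
             = sum_{x in A} mu(x) sum_{y <> x} R(x,y) P_y[H_B < H_A] *)
Definition cap (Rt : E -> E -> R) (mu : E -> R) (A B : {set E}) : R :=
  \big[Rplus/0]_(x in A) (mu x * \big[Rplus/0]_(y | y != x) (Rt x y * hitp Rt A B y)).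

Definition muS (mu : E -> R) (A : {set E}) : R := \big[Rplus/0]_(x in A) mu x.

(** jump rates of the trace process on F (for x <> y in F):
    R^F(x,y) = lambda(x) P_x[ first return to F after the first jump is at y ] *)
Definition traceRate (Rt : E -> E -> R) (F : {set E}) (x y : E) : R :=
  \big[Rplus/0]_(z | z != x) (Rt x z * hitp Rt (F :\ y) [set y] z).

Definition rF (Rt : E -> E -> R) (mu : E -> R) (F Fx Fy : {set E}) : R :=
  / muS mu Fx * \big[Rplus/0]_(x in Fx) (mu x * \big[Rplus/0]_(y in Fy) traceRate Rt F x y).

Definition genL (Rt : E -> E -> R) (f : E -> R) (x : E) : R :=
  \big[Rplus/0]_(y | y != x) (Rt x y * (f y - f x)).

Definition indic (D : {set E}) (x : E) : R := if x \in D then 1 else 0.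

(** E_x[ int_0^t 1{eta_{s b} in D} ds ] = int_0^t (e^{s b L} 1_D)(x) ds
      = sum_k t^(k+1) b^k / (k+1)! (L^k 1_D)(x)   (Kolmogorov / semigroup formula) *)
Definition occ (Rt : E -> E -> R) (b t : R) (D : {set E}) (x : E) : R :=
  Lim (fun n => \big[Rplus/0]_(k < n)
        (t ^ k.+1 * b ^ k / INR (factorial k.+1) * iter k (genL Rt) (indic D) x)).

Definition irreducible (Rt : E -> E -> R) : Prop :=
  forall x y : E, connect (fun a b => (a != b) && posb (Rt a b)) x y.

Definition invariant_prob (Rt : E -> E -> R) (mu : E -> R) : Prop :=
  (forall x, 0 <= mu x) /\ \big[Rplus/0]_(x : E) mu x = 1 /\
  (forall y, \big[Rplus/0]_(x | x != y) (mu x * Rt x y) = mu y * holding Rt y).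

Definition assumpA_i (Rt : nat -> E -> E -> R) : Prop :=
  forall x y : E, x <> y ->
    (forall N, Rt N x y = 0) \/ (forall N, 0 < Rt N x y).

Definition monom (Rt : E -> E -> R) (k : E -> E -> nat) : R :=
  \big[Rmult/1]_(x : E) \big[Rmult/1]_(y | y != x) (Rt x y ^ k x y).

(** k : B -> Z_+ with sum m (extended by 0 outside B) *)
Definition admissible (Rt : nat -> E -> E -> R) (m : nat) (k : E -> E -> nat) : Prop :=
  (forall x y, k x y <> 0%nat -> x <> y /\ forall N, 0 < Rt N x y) /\
  (\sum_(x : E) \sum_(y : E) k x y)%N = m.

(** Assumption A (ii): the families of monomials of degree m are ordered *)
Definition assumpA_ii (Rt : nat -> E -> E -> R) : Prop :=
  forall m : nat, (1 <= m)%N ->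
  forall k k' : E -> E -> nat, admissible Rt m k -> admissible Rt m k' -> k <> k' ->
  exists l, Un_cv (fun N => atan (monom (Rt N) k / monom (Rt N) k')) l.

End Chain.

Section Reduced.
Variable p : nat.

Definition edgeP (r : 'I_p -> 'I_p -> R) : rel 'I_p :=
  fun x y => (x != y) && posb (r x y).

Definition recurrentb (r : 'I_p -> 'I_p -> R) (x : 'I_p) : bool :=
  [forall y, connect (edgeP r) x y ==> connect (edgeP r) y x].

Definition commClass (r : 'I_p -> 'I_p -> R) (x : 'I_p) : {set 'I_p} :=
  [set y | connect (edgeP r) x y && connect (edgeP r) y x].

Definition recClasses (r : 'I_p -> 'I_p -> R) : {set {set 'I_p}} :=
  [set commClass r x | x in [set x | recurrentb r x]].

Variable E : finType.

Definition GG (F : 'I_p -> {set E}) (C : {set 'I_p}) : {set E} :=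
  \bigcup_(x in C) F x.

Definition breveG (F : 'I_p -> {set E}) (r : 'I_p -> 'I_p -> R) (C : {set 'I_p}) : {set E} :=
  \bigcup_(C' in recClasses r | C' != C) GG F C'.

Definition is_partition (F : 'I_p -> {set E}) (Delta : {set E}) : Prop :=
  (forall x, F x != set0) /\
  (forall x y, x != y -> [disjoint F x & F y]) /\
  (forall x, [disjoint F x & Delta]) /\
  (\bigcup_x F x) :|: Delta = [set: E].

End Reduced.

(* To reach breve G_a from G_a the chain must enter F outside G_a, so a union
   bound over the first point of F it visits gives
     Cap_N(G_a, breve G_a) / mu_N(G_a) <= sum_{x in G_a} sum_{y notin G_a} r^F_N(F_x, F_y).
   Multiplied by beta_N, each term tends to r_F(x, y) by (H1), and r_F(x, y) = 0
   because no positive rate of X_F leaves a recurrent class.  Only (H1) and the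
   nonnegativity of the rates and of mu_N enter the argument. *)
From HB Require Import structures.
From Stdlib Require Import Reals ClassicalEpsilon.
From mathcomp Require Import all_boot.

Set Implicit Arguments.
Unset Strict Implicit.
Unset Printing Implicit Defensive.

Open Scope R_scope.

Lemma Rplus_associative : associative Rplus.
Proof. by move=> x y z; rewrite Rplus_assoc. Qed.

HB.instance Definition _ :=
  Monoid.isComLaw.Build R 0 Rplus Rplus_associative Rplus_comm Rplus_0_l.

Lemma Rinv_ge0 x : 0 <= x -> 0 <= / x.
Proof.
case/Rle_lt_or_eq_dec => [x_gt0|<-]; last by rewrite Rinv_0; apply: Rle_refl.
by left; apply: Rinv_0_lt_compat.
Qed.

Lemma Rdiv_le_of_le_mul a c s : 0 <= s -> 0 <= c -> a <= c * s -> a / c <= s.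
Proof.
move=> s_ge0; case/Rle_lt_or_eq_dec => [c_gt0 le_a_cs|<- _]; last first.
  by rewrite /Rdiv Rinv_0 Rmult_0_r.
apply: (Rmult_le_reg_l c) => //.
by rewrite /Rdiv Rmult_comm Rmult_assoc Rinv_l ?Rmult_1_r //; apply: Rgt_not_eq.
Qed.

Section RealSums.
Variable I : Type.
Implicit Types (r : seq I) (P : pred I) (f g : I -> R).

Lemma big_Rle r P f g : (forall i, P i -> f i <= g i) ->
  \big[Rplus/0]_(i <- r | P i) f i <= \big[Rplus/0]_(i <- r | P i) g i.
Proof.
move=> le_fg; apply: (big_ind2 (fun a b => a <= b)) => //; first exact: Rle_refl.
by move=> *; apply: Rplus_le_compat.
Qed.

Lemma big_Rge0 r P f : (forall i, P i -> 0 <= f i) ->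
  0 <= \big[Rplus/0]_(i <- r | P i) f i.
Proof.
move=> f_ge0; apply: (big_ind (fun a => 0 <= a)) => //; first exact: Rle_refl.
by move=> a b a_ge0 b_ge0; rewrite -(Rplus_0_l 0); apply: Rplus_le_compat.
Qed.

Lemma Rmult_sumr r P f c :
  c * \big[Rplus/0]_(i <- r | P i) f i = \big[Rplus/0]_(i <- r | P i) (c * f i).
Proof.
apply: (big_ind2 (fun a b => c * a = b)) => //; first by rewrite Rmult_0_r.
by move=> a b x y <- <-; rewrite Rmult_plus_distr_l.
Qed.

Lemma Rmult_suml r P f c :
  \big[Rplus/0]_(i <- r | P i) f i * c = \big[Rplus/0]_(i <- r | P i) (f i * c).
Proof. by rewrite Rmult_comm Rmult_sumr; apply: eq_bigr => i _; rewrite Rmult_comm. Qed.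

Lemma Un_cv_const c : Un_cv (fun _ => c) c.
Proof. by move=> e e_gt0; exists 0%nat => n _; rewrite /Rdist Rminus_diag Rabs_R0. Qed.

Lemma Un_cv_big r P (u : nat -> I -> R) (l : I -> R) :
  (forall i, P i -> Un_cv (fun N => u N i) (l i)) ->
  Un_cv (fun N => \big[Rplus/0]_(i <- r | P i) u N i) (\big[Rplus/0]_(i <- r | P i) l i).
Proof.
move=> cv_u; elim: r => [|i r IH].
  rewrite big_nil; apply: (Un_cv_ext (fun _ => 0)); last exact: Un_cv_const.
  by move=> N; rewrite big_nil.
rewrite big_cons; case: ifP => Pi.
  apply: (Un_cv_ext (fun N => u N i + \big[Rplus/0]_(j <- r | P j) u N j)).
    by move=> N; rewrite big_cons Pi.
  by apply: CV_plus => //; apply: cv_u.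
by apply: (Un_cv_ext _ _ _ _ IH) => N; rewrite big_cons Pi.
Qed.

Lemma Un_cv_big0 r P (u : nat -> I -> R) :
  (forall i, P i -> Un_cv (fun N => u N i) 0) ->
  Un_cv (fun N => \big[Rplus/0]_(i <- r | P i) u N i) 0.
Proof. by move=> cv_u; have := Un_cv_big r cv_u; rewrite big1. Qed.

End RealSums.

Lemma big_Rle_subset (T : finType) (X Y : {set T}) (h : T -> R) :
  (forall x, 0 <= h x) -> X \subset Y ->
  \big[Rplus/0]_(x in X) h x <= \big[Rplus/0]_(x in Y) h x.
Proof.
move=> h_ge0 sXY; rewrite big_mkcond [X in _ <= X]big_mkcond /=.
apply: big_Rle => x _; case: ifP => [/(subsetP sXY) ->|_]; first exact: Rle_refl.
by case: ifP => _; [apply: h_ge0|apply: Rle_refl].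
Qed.

Lemma big_Rle_cover (T J : finType) (D : {set T}) (Q : pred J) (G : J -> {set T})
    (h : T -> R) :
  (forall x, 0 <= h x) -> (forall x, x \in D -> exists2 j, Q j & x \in G j) ->
  \big[Rplus/0]_(x in D) h x <= \big[Rplus/0]_(j | Q j) \big[Rplus/0]_(x in G j) h x.
Proof.
move=> h_ge0 covD; under [X in _ <= X]eq_bigr do rewrite big_mkcond.
rewrite exchange_big /= big_mkcond /=; apply: big_Rle => x _.
have cond_ge0 j : 0 <= (if x \in G j then h x else 0).
  by case: ifP => _; [apply: h_ge0|apply: Rle_refl].
case: ifP => [/covD [j Qj xGj]|_]; last exact: big_Rge0.
rewrite (bigD1 j) //= xGj -{1}(Rplus_0_r (h x)).
by apply: Rplus_le_compat_l; apply: big_Rge0.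
Qed.

Lemma Un_cv_squeeze0 (t u : nat -> R) :
  (forall N, 0 <= t N <= u N) -> Un_cv u 0 -> Un_cv t 0.
Proof.
move=> t_between cv_u e e_gt0; have [N0 u_small] := cv_u e e_gt0.
exists N0 => N le_N0N; have [t_ge0 le_tu] := t_between N.
move: (u_small N le_N0N); rewrite /Rdist !Rminus_0_r (Rabs_pos_eq _ t_ge0).
by rewrite Rabs_pos_eq; [apply: Rle_lt_trans|apply: Rle_trans le_tu].
Qed.

Lemma Lim_Un_cv u l : Un_cv u l -> Lim u = l.
Proof. by move=> cv_ul; apply: (UL_sequence u) => //; apply: epsilon_spec; exists l. Qed.

Section RecurrentClasses.
Variables (p : nat) (r : 'I_p -> 'I_p -> R).

Lemma recClasses_eq C C' x : C \in recClasses r -> C' \in recClasses r ->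
  x \in C -> x \in C' -> C = C'.
Proof.
case/imsetP => x0 _ ->; case/imsetP => x1 _ ->.
rewrite !inE => /andP [c0x cx0] /andP [c1x cx1].
apply/setP => y; rewrite !inE.
apply/andP/andP => [[c0y cy0]|[c1y cy1]]; split.
- exact: connect_trans (connect_trans c1x cx0) c0y.
- exact: connect_trans cy0 (connect_trans c0x cx1).
- exact: connect_trans (connect_trans c0x cx1) c1y.
- exact: connect_trans cy1 (connect_trans c1x cx0).
Qed.

Lemma recClass_exit_rate C x y : C \in recClasses r -> x \in C -> y \notin C ->
  0 <= r x y -> r x y = 0.
Proof.
case/imsetP => x0; rewrite inE => /forallP rec_x0 -> xC yC.
case/Rle_lt_or_eq_dec => [r_gt0|//]; exfalso.
have neq_xy : x != y by apply: contraNneq yC => <-.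
move: xC; rewrite inE => /andP [c0x _].
have c0y : connect (edgeP r) x0 y.
  apply: connect_trans c0x (connect1 _).
  by rewrite /edgeP neq_xy /posb; case: Rlt_dec.
by move: yC; rewrite inE c0y (implyP (rec_x0 y) c0y).
Qed.

Lemma breveG_sub (E : finType) (F : 'I_p -> {set E}) C :
  (forall x y, x != y -> [disjoint F x & F y]) -> C \in recClasses r ->
  breveG F r C \subset (\bigcup_z F z) :\: GG F C.
Proof.
move=> disjF rC; apply/subsetP => e /bigcupP [C' /andP [rC' neC'C] /bigcupP [y yC' eFy]].
rewrite inE; apply/andP; split; last by apply/bigcupP; exists y.
apply/bigcupP => [[x xC eFx]].
have [eq_xy|neq_xy] := eqVneq x y.
  by move/eqP: neC'C; apply; apply: (recClasses_eq rC' rC yC'); rewrite -eq_xy.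
by have := disjointFr (disjF x y neq_xy) eFx; rewrite eFy.
Qed.

End RecurrentClasses.

Section Chain.
Variables (E : finType) (Rt : E -> E -> R).
Hypothesis Rt_ge0 : forall x y, 0 <= Rt x y.

Lemma holding_ge0 x : 0 <= holding Rt x.
Proof. exact: big_Rge0. Qed.

Lemma jumpP_ge0 x y : 0 <= jumpP Rt x y.
Proof.
rewrite /jumpP; case: eqP => _; first exact: Rle_refl.
by apply: Rmult_le_pos => //; apply/Rinv_ge0/holding_ge0.
Qed.

Lemma sum_jumpP_le1 x : \big[Rplus/0]_y jumpP Rt x y <= 1.
Proof.
have -> : \big[Rplus/0]_y jumpP Rt x y = holding Rt x * / holding Rt x.
  rewrite {1}/holding Rmult_suml [RHS]big_mkcond; apply: eq_bigr => y _.
  by rewrite /jumpP; case: eqP => _ //=; rewrite Rmult_0_l.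
have [->|hx_neq0] := Req_dec (holding Rt x) 0.
  by rewrite Rmult_0_l; left; apply: Rlt_0_1.
by rewrite Rinv_r //; apply: Rle_refl.
Qed.

Section Hitting.
Variables A B : {set E}.

Lemma hitn_in_B n z : z \in B -> hitn Rt A B n z = 1.
Proof. by case: n => [|n] /= ->. Qed.

Lemma hitn_in_A n z : z \notin B -> z \in A -> hitn Rt A B n z = 0.
Proof. by case: n => [|n] /= /negbTE -> ->. Qed.

Lemma hitn0_out z : z \notin B -> z \notin A -> hitn Rt A B 0 z = 0.
Proof. by move=> /= /negbTE -> /negbTE ->. Qed.

Lemma hitnS_out n z : z \notin B -> z \notin A ->
  hitn Rt A B n.+1 z = \big[Rplus/0]_y (jumpP Rt z y * hitn Rt A B n y).
Proof. by move=> /= /negbTE -> /negbTE ->. Qed.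

Lemma hitn_ge0 n z : 0 <= hitn Rt A B n z.
Proof.
elim: n z => [|n IH] z /=; case: ifP => _; try by left; apply: Rlt_0_1.
- by case: ifP => _; apply: Rle_refl.
case: ifP => _; first exact: Rle_refl.
by apply: big_Rge0 => y _; apply: Rmult_le_pos; [apply: jumpP_ge0|apply: IH].
Qed.

Lemma hitn_le1 n z : hitn Rt A B n z <= 1.
Proof.
elim: n z => [|n IH] z /=; case: ifP => _; try exact: Rle_refl.
- by case: ifP => _; left; apply: Rlt_0_1.
case: ifP => _; first by left; apply: Rlt_0_1.
apply: Rle_trans (sum_jumpP_le1 z); apply: big_Rle => y _.
rewrite -{2}(Rmult_1_r (jumpP Rt z y)).
by apply: Rmult_le_compat_l; [apply: jumpP_ge0|apply: IH].
Qed.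

Lemma hitn_nondecreasing n z : hitn Rt A B n z <= hitn Rt A B n.+1 z.
Proof.
elim: n z => [|n IH] z /=;
  case: ifP => _; try exact: Rle_refl; case: ifP => _; try exact: Rle_refl.
- by apply: big_Rge0 => y _; apply: Rmult_le_pos; [apply: jumpP_ge0|exact: (hitn_ge0 0)].
- by apply: big_Rle => y _; apply: Rmult_le_compat_l; [apply: jumpP_ge0|apply: IH].
Qed.

Lemma hitp_cv z : Un_cv (fun n => hitn Rt A B n z) (hitp Rt A B z).
Proof.
have [l cv_l] : {l | Un_cv (fun n => hitn Rt A B n z) l}.
  apply: growing_cv => [n|]; first exact: hitn_nondecreasing.
  by exists 1 => _ [n ->]; apply: hitn_le1.
by rewrite /hitp (Lim_Un_cv cv_l).
Qed.

Lemma hitp_ge0 z : 0 <= hitp Rt A B z.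
Proof. by apply: (Rle_cv_lim _ (Un_cv_const 0) (hitp_cv z)) => n; apply: hitn_ge0. Qed.

End Hitting.

(* On [H_B < H_A] the first point of [Fall] visited lies in [Fall :\: A]. *)
Lemma hitn_le_first_entrance (Fall A B : {set E}) n z : B \subset Fall :\: A ->
  hitn Rt A B n z <= \big[Rplus/0]_(y in Fall :\: A) hitn Rt (Fall :\ y) [set y] n z.
Proof.
move=> sB.
have entrance_ge0 k w :
    0 <= \big[Rplus/0]_(y in Fall :\: A) hitn Rt (Fall :\ y) [set y] k w.
  by apply: big_Rge0 => y _; apply: hitn_ge0.
have entrance_ge1 k w : w \in Fall :\: A ->
    1 <= \big[Rplus/0]_(y in Fall :\: A) hitn Rt (Fall :\ y) [set y] k w.
  move=> wFA; rewrite (bigD1 w) //= hitn_in_B ?set11 // -{1}(Rplus_0_r 1).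
  by apply: Rplus_le_compat_l; apply: big_Rge0 => y _; apply: hitn_ge0.
elim: n z => [|n IH] z; have [zFA|zFA] := boolP (z \in Fall :\: A);
  try exact: Rle_trans (hitn_le1 _ _ _ _) (entrance_ge1 _ _ zFA).
all: have zB : z \notin B by apply: contra zFA; apply: (subsetP sB).
all: have [zA|zA] := boolP (z \in A); first by rewrite hitn_in_A //; apply: entrance_ge0.
- by rewrite hitn0_out //; apply: entrance_ge0.
- have zF : z \notin Fall by move: zFA; rewrite inE zA.
  have unfold_rhs y : y \in Fall :\: A -> hitn Rt (Fall :\ y) [set y] n.+1 z
      = \big[Rplus/0]_w (jumpP Rt z w * hitn Rt (Fall :\ y) [set y] n w).
    case/setDP => yF _; apply: hitnS_out; rewrite !inE ?(negbTE zF) ?andbF //.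
    by apply: contraNneq zF => ->.
  rewrite hitnS_out // (eq_bigr _ unfold_rhs) exchange_big /=.
  apply: big_Rle => w _; rewrite -Rmult_sumr.
  by apply: Rmult_le_compat_l; [apply: jumpP_ge0|apply: IH].
Qed.

Lemma hitp_le_first_entrance (Fall A B : {set E}) z : B \subset Fall :\: A ->
  hitp Rt A B z <= \big[Rplus/0]_(y in Fall :\: A) hitp Rt (Fall :\ y) [set y] z.
Proof.
move=> sB; apply: (Rle_cv_lim _ (hitp_cv A B z)
  (Un_cv_big _ (fun y (_ : y \in Fall :\: A) => hitp_cv (Fall :\ y) [set y] z))).
by move=> n; apply: hitn_le_first_entrance.
Qed.

Lemma traceRate_ge0 Fall x y : 0 <= traceRate Rt Fall x y.
Proof. by apply: big_Rge0 => z _; apply: Rmult_le_pos => //; apply: hitp_ge0. Qed.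

Variable m : E -> R.
Hypothesis m_ge0 : forall x, 0 <= m x.

(* [traceFlux Fall X Y] is mu(X) r^F(X, Y) without the normalisation by mu(X). *)
Definition traceFlux (Fall X Y : {set E}) : R :=
  \big[Rplus/0]_(x in X) (m x * \big[Rplus/0]_(y in Y) traceRate Rt Fall x y).

Lemma traceFlux_ge0 Fall X Y : 0 <= traceFlux Fall X Y.
Proof.
apply: big_Rge0 => x _; apply: Rmult_le_pos => //.
by apply: big_Rge0 => y _; apply: traceRate_ge0.
Qed.

Lemma muS_ge0 X : 0 <= muS m X.
Proof. exact: big_Rge0. Qed.

Lemma rF_ge0 Fall X Y : 0 <= rF Rt m Fall X Y.
Proof. by apply: Rmult_le_pos; [apply/Rinv_ge0/muS_ge0|apply: traceFlux_ge0]. Qed.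

Lemma traceFlux_muS_rF Fall X Y : traceFlux Fall X Y = muS m X * rF Rt m Fall X Y.
Proof.
rewrite /rF -Rmult_assoc; have [muX0|muX_neq0] := Req_dec (muS m X) 0; last first.
  by rewrite Rinv_r // Rmult_1_l.
rewrite muX0 !Rmult_0_l /traceFlux big1 // => x xX.
suff -> : m x = 0 by rewrite Rmult_0_l.
apply: Rle_antisym => //; rewrite -muX0 /muS (bigD1 x) //= -{1}(Rplus_0_r (m x)).
by apply: Rplus_le_compat_l; apply: big_Rge0.
Qed.

Lemma cap_ge0 A B : 0 <= cap Rt m A B.
Proof.
apply: big_Rge0 => x _; apply: Rmult_le_pos => //.
by apply: big_Rge0 => y _; apply: Rmult_le_pos => //; apply: hitp_ge0.
Qed.

Lemma cap_le_traceFlux (Fall A B : {set E}) : B \subset Fall :\: A ->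
  cap Rt m A B <= traceFlux Fall A (Fall :\: A).
Proof.
move=> sB; apply: big_Rle => x _; apply: Rmult_le_compat_l => //.
rewrite /traceRate exchange_big /=; apply: big_Rle => z _; rewrite -Rmult_sumr.
by apply: Rmult_le_compat_l => //; apply: hitp_le_first_entrance.
Qed.

Variables (p : nat) (F : 'I_p -> {set E}).

Lemma traceFlux_GG_le C :
  traceFlux (\bigcup_z F z) (GG F C) ((\bigcup_z F z) :\: GG F C) <=
  \big[Rplus/0]_(x in C) \big[Rplus/0]_(y | y \notin C)
     traceFlux (\bigcup_z F z) (F x) (F y).
Proof.
set Fall := \bigcup_z F z; have tr_ge0 := traceRate_ge0 Fall.
apply: (Rle_trans _ (\big[Rplus/0]_(v in GG F C) (m v *
    \big[Rplus/0]_(y | y \notin C) \big[Rplus/0]_(w in F y) traceRate Rt Fall v w))).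
  apply: big_Rle => v _; apply: Rmult_le_compat_l => //.
  apply: big_Rle_cover => // w /setDP [/bigcupP [y _ wFy] wGG]; exists y => //.
  by apply: contraNN wGG => yC; apply/bigcupP; exists y.
apply: (Rle_trans _ (\big[Rplus/0]_(x in C) \big[Rplus/0]_(v in F x) (m v *
    \big[Rplus/0]_(y | y \notin C) \big[Rplus/0]_(w in F y) traceRate Rt Fall v w))).
  apply: big_Rle_cover => [v|v /bigcupP //].
  by apply: Rmult_le_pos => //; do 2!apply: big_Rge0 => ? _.
apply: big_Rle => x _; rewrite /traceFlux; under eq_bigr do rewrite Rmult_sumr.
by rewrite exchange_big; apply: Rle_refl.
Qed.

Lemma cap_GG_le C (B : {set E}) : B \subset (\bigcup_z F z) :\: GG F C ->
  cap Rt m (GG F C) B / muS m (GG F C) <=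
  \big[Rplus/0]_(x in C) \big[Rplus/0]_(y | y \notin C) rF Rt m (\bigcup_z F z) (F x) (F y).
Proof.
move=> sB; apply: Rdiv_le_of_le_mul; [|exact: muS_ge0|].
  by do 2!apply: big_Rge0 => ? _; apply: rF_ge0.
apply: Rle_trans (cap_le_traceFlux sB) _; apply: Rle_trans (traceFlux_GG_le C) _.
rewrite Rmult_sumr; apply: big_Rle => x xC; rewrite Rmult_sumr; apply: big_Rle => y _.
rewrite traceFlux_muS_rF; apply: Rmult_le_compat_r; first exact: rF_ge0.
by apply: big_Rle_subset => //; apply: bigcup_sup.
Qed.

End Chain.

Theorem mainTheorem19 (E : finType) (Rt : nat -> E -> E -> R) (mu : nat -> E -> R)
  (p : nat) (F : 'I_p -> {set E}) (Delta : {set E})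
  (bm b : nat -> R) (r : 'I_p -> 'I_p -> R) :
  (* the chains: nonnegative rates, irreducible, invariant probability mu_N *)
  (forall N x y, 0 <= Rt N x y) ->
  (forall N, irreducible (Rt N)) ->
  (forall N, invariant_prob (Rt N) (mu N)) ->
  (* Assumption A *)
  assumpA_i Rt -> assumpA_ii Rt ->
  (* partition with p >= 2 *)
  (2 <= p)%N ->
  is_partition F Delta ->
  (* beta^-_N, beta_N positive with beta^-_N / beta_N -> 0 *)
  (forall N, 0 < bm N) -> (forall N, 0 < b N) ->
  Un_cv (fun N => bm N / b N) 0 ->
  (* (H0) *)
  (forall x eta, eta \in F x ->
     exists l, 0 < l <= 1 /\ Un_cv (fun N => mu N eta / muS (mu N) (F x)) l) ->
  (* (H1) with b_N = beta_N; r x y = r_F(x,y) *)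
  (forall x y, x != y ->
     0 <= r x y /\
     Un_cv (fun N => b N * rF (Rt N) (mu N) (\bigcup_z F z) (F x) (F y)) (r x y)) ->
  0 < \big[Rplus/0]_(x : 'I_p) \big[Rplus/0]_(y | y != x) r x y ->
  (* (H2) with a_N = beta^-_N  (liminf > 0) *)
  (forall x, (2 <= #|F x|)%N ->
     forall eta xi, eta \in F x -> xi \in F x -> eta != xi ->
     exists c, 0 < c /\ exists N0, forall N, (N0 <= N)%N ->
       c <= bm N * cap (Rt N) (mu N) [set eta] [set xi] / muS (mu N) (F x)) ->
  (* (H3) with b_N = beta_N *)
  (forall t, 0 < t ->
     Un_cv (fun N => \big[Rmax/0]_(eta : E) occ (Rt N) (b N) t Delta eta) 0) ->
  (* q > 1 recurrent classes of X_F *)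
  (1 < #|recClasses r|)%N ->
  (* beta_N / beta^+_N -> 0 *)
  Un_cv (fun N => b N *
     \big[Rplus/0]_(C in recClasses r)
        (cap (Rt N) (mu N) (GG F C) (breveG F r C) / muS (mu N) (GG F C))) 0.
Proof.
move=> Rt_ge0 _ inv_mu _ _ _ [_ [disjF _]] _ b_gt0 _ _ cv_rF _ _ _ _.
have mu_ge0 N x : 0 <= mu N x by case: (inv_mu N).
apply: (@Un_cv_squeeze0 _ (fun N => \big[Rplus/0]_(C in recClasses r)
   \big[Rplus/0]_(x in C) \big[Rplus/0]_(y | y \notin C)
      (b N * rF (Rt N) (mu N) (\bigcup_z F z) (F x) (F y)))) => [N|].
  split.
    apply: Rmult_le_pos; first exact: Rlt_le.
    apply: big_Rge0 => C _; apply: Rmult_le_pos; first exact: cap_ge0.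
    exact/Rinv_ge0/muS_ge0.
  rewrite Rmult_sumr; apply: big_Rle => C rC.
  apply: Rle_trans (Rmult_le_compat_l _ _ _ (Rlt_le _ _ (b_gt0 N))
    (cap_GG_le (Rt_ge0 N) (mu_ge0 N) (breveG_sub disjF rC))) _.
  by rewrite Rmult_sumr; apply: big_Rle => x _; rewrite Rmult_sumr; apply: Rle_refl.
apply: Un_cv_big0 => C rC; apply: Un_cv_big0 => x xC; apply: Un_cv_big0 => y yC.
have neq_xy : x != y by apply: contraNneq yC => <-.
have [r_ge0 cv_r] := cv_rF x y neq_xy.
by rewrite -(recClass_exit_rate rC xC yC r_ge0).
Qed.
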